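(* Let $N\in\mathbb{N}$ and let $Q_N$ be a probability distribution on $\mathbb{N}\cup\{\infty\}$ with probability generating function $\varphi_{Q_N}(x)=\sum_{k\ge1}x^kQ_N(\{k\})$. In the Wright–Fisher graph with selection $Q_N$ described in the context, the type-0 allele frequency process $(X^N_g)_{g\in\mathbb{N}}$ is a time-homogeneous Markov chain on $\{0,1/N,\dots,(N-1)/N,1\}$ with transition probabilities $$\mathbb{P}\big(X^N_g=m/N\mid X^N_{g-1}=x\big)=\binom{N}{m}\varphi_{Q_N}(x)^m\big(1-\varphi_{Q_N}(x)\big)^{N-m},\qquad m=0,1,\dots,N,$$ for every $x\in\{0,1/N,\dots,1\}$.
   Context: Wright–Fisher graph with selection $Q_N$: generations are indexed by $g\in\mathbb{Z}$, each consisting of $N$ individuals labelled $1,\dots,N$; write $v=(g,i)$. Each individual $v$ independently draws a number $K_v$ with law $Q_N$ (the $K_v$ are i.i.d.), and, given $K_v=k$, chooses $k$ labels $L_{(v,1)},\dots,L_{(v,k)}$ independently and uniformly at random from $\{1,\dots,N\}$ (with replacement, all choices independent across individuals and of the $K$'s); the individuals $(g-1,L_{(v,j)})$ are the potential parents of $v$. Types lie in $\{0,1\}$: the individuals of generation $0$ are assigned types arbitrarily, and for every $g\ge1$ an individual of generation $g$ has type $0$ if and only if all of its potential parents have type $0$ (otherwise type $1$). $X^N_g$ denotes the fraction of type-$0$ individuals in generation $g$. *)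

From HB Require Import structures.
From mathcomp Require Import all_boot all_order all_algebra.
From mathcomp Require Import all_classical all_reals all_analysis.
Set Implicit Arguments. Unset Strict Implicit. Unset Printing Implicit Defensive.
Import Order.TTheory GRing.Theory Num.Theory.
Local Open Scope classical_set_scope.
Local Open Scope ring_scope.

(* Values of K_v live in N ∪ {∞}, encoded as [option nat]:
   [Some k] = the finite value k, [None] = ∞. *)

(* Probability generating function
     phi_Q(x) = sum_{k>=1} x^k Q({k})  (+ x^∞ Q({∞}) with x^∞ := lim_k x^k,
   i.e. x^∞ = 1 if x = 1 and 0 for 0 <= x < 1). *)
Definition pgf (R : realType) (Q : option nat -> R) (x : R) : R :=
  \big[+%R/0%R]_(1 <= k <oo) (x ^+ k * Q (Some k))
  + (if x == 1 then Q None else 0).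

(* Type of individual (g, i): [true] iff type 0.
   Generation 0 has the arbitrary types [init];
   K g i w    = number K_(g,i) of potential parents of individual (g,i);
   L g i j w  = label L_((g,i),j) of its j-th potential parent (in generation g-1);
   only the first K_(g,i) labels are used (all of them if K_(g,i) = ∞). *)
Fixpoint type0 (N : nat) (T : Type) (init : 'I_N -> bool)
  (K : nat -> 'I_N -> T -> option nat) (L : nat -> 'I_N -> nat -> T -> 'I_N)
  (g : nat) (i : 'I_N) (w : T) {struct g} : bool :=
  match g with
  | 0 => init i
  | g'.+1 =>
      match K g i w with
      | Some k => [forall j : 'I_k, type0 init K L g' (L g i j w) w]
      | None => `[< forall j : nat, type0 init K L g' (L g i j w) w >]
      end
  end.

Definition freq0 (R : realType) (N : nat) (T : Type) (init : 'I_N -> bool)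
  (K : nat -> 'I_N -> T -> option nat) (L : nat -> 'I_N -> nat -> T -> 'I_N)
  (g : nat) (w : T) : R :=
  (#|[set i : 'I_N | type0 init K L g i w]|)%:R / N%:R.

(* The family (K_v)_v, (L_(v,j))_(v,j) is mutually independent, each K_v has
   law Q and each L_(v,j) is uniform on {1..N}: the joint probability of any
   finite collection of (distinct) variables taking prescribed values factorizes. *)
Definition WF_iid (R : realType) (d : measure_display) (T : measurableType d)
  (P : probability T R) (N : nat) (Q : option nat -> R)
  (K : nat -> 'I_N -> T -> option nat) (L : nat -> 'I_N -> nat -> T -> 'I_N) : Prop :=
  (forall g i a, measurable [set w | K g i w = a]) /\
  (forall g i j b, measurable [set w | L g i j w = b]) /\
  (forall (s : seq (nat * 'I_N)) (t : seq (nat * 'I_N * nat))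
          (a : nat * 'I_N -> option nat) (b : nat * 'I_N * nat -> 'I_N),
      uniq s -> uniq t ->
      P [set w | (forall v, v \in s -> K v.1 v.2 w = a v) /\
                 (forall u, u \in t -> L u.1.1 u.1.2 u.2 w = b u)]
      = ((\prod_(v <- s) Q (a v)) * (N%:R^-1) ^+ size t)%:E).

From HB Require Import structures.
From mathcomp Require Import all_boot all_order all_algebra.
From mathcomp Require Import all_classical all_reals all_analysis.
From mathcomp Require Import ring lra.

Set Implicit Arguments. Unset Strict Implicit. Unset Printing Implicit Defensive.
Import Order.TTheory GRing.Theory Num.Theory.
Import numFieldNormedType.Exports.
Local Open Scope classical_set_scope.
Local Open Scope ring_scope.

Section ProductSums.
Variable R : comPzRingType.

Lemma sum_prod_ffun_count (I X : finType) (r : X -> R) (A : pred X) (m : nat) :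
  \sum_(f : {ffun I -> X} | #|[set i | A (f i)]%SET| == m) \prod_i r (f i) =
  'C(#|I|, m)%:R * (\sum_(x | A x) r x) ^+ m * (\sum_(x | ~~ A x) r x) ^+ (#|I| - m).
Proof.
pose a := \sum_(x | A x) r x; pose b := \sum_(x | ~~ A x) r x.
pose S_ (f : {ffun I -> X}) := [set i | A (f i)]%SET.
rewrite (partition_big S_ (fun S : {set I} => #|S| == m)) //=.
have fibre (S : {set I}) : #|S| == m ->
    \sum_(f | (#|S_ f| == m) && (S_ f == S)) \prod_i r (f i) = a ^+ m * b ^+ (#|I| - m).
  move=> /eqP Sm; rewrite (eq_bigl (fun f => f \in family (fun i => if i \in S then A else predC A))).
    rewrite -(bigA_distr_big_dep _ (fun _ x => r x)) (bigID (mem S)) /=.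
    rewrite (eq_bigr (fun=> a)) => [|i iS]; last by rewrite iS.
    rewrite [X in _ * X](eq_bigr (fun=> b)) => [|i /negPf iS]; last by rewrite iS.
    by rewrite !prodr_const -Sm -(cardsC S) addKn; congr (_ * _ ^+ _); apply: eq_card => i; rewrite !inE.
  move=> f; rewrite /S_ -Sm; apply/andP/familyP => [[_ /eqP <-] i|fS].
    by rewrite inE; case Afi: (A (f i)); rewrite ?inE /= ?Afi.
  have -> : [set i | A (f i)]%SET = S.
    by apply/setP => i; have := fS i; case: (i \in S); rewrite !inE => fiA; [exact: fiA | exact: negPf fiA].
  by rewrite !eqxx.
rewrite (eq_bigr _ fibre) sumr_const -mulrA mulr_natl; congr (_ *+ _).
by rewrite -card_draws; apply: eq_card => S; rewrite !inE.
Qed.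

End ProductSums.

Lemma sum_labels (R : fieldType) (N n c : nat) (S : {set 'I_N}) :
  (N%:R : R) != 0 -> (c <= n)%N ->
  \sum_(l : {ffun 'I_n -> 'I_N} | [forall j : 'I_n, (j < c)%N ==> (l j \in S)])
    (N%:R^-1 : R) ^+ n = (#|S|%:R / N%:R) ^+ c.
Proof.
move=> N0 cn; rewrite (eq_bigr (fun=> \prod_(j : 'I_n) N%:R^-1)); last first.
  by move=> l _; rewrite prodr_const card_ord.
rewrite (eq_bigl (fun l => l \in family (fun j : 'I_n => if (j < c)%N then mem S else mem predT))).
  rewrite -(bigA_distr_big_dep _ (fun _ _ => N%:R^-1)) (bigID (fun j : 'I_n => (j < c)%N)) /=.
  rewrite (eq_bigr (fun=> #|S|%:R / N%:R)) => [|j jc]; last first.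
    by rewrite jc sumr_const mulr_natl -mulr_natr.
  rewrite [X in _ * X]big1 ?mulr1 => [|j /negPf jc]; last first.
    by rewrite jc sumr_const card_ord -[LHS]mulr_natr mulVf.
  by rewrite -(big_ord_widen _ (fun=> #|S|%:R / N%:R) cn) prodr_const card_ord.
by move=> l; apply/forallP/familyP => H j; have := H j; case: (j < c)%N.
Qed.

Section RealProbability.
Context (R : realType) (d : measure_display) (T : measurableType d)
  (P : probability T R).

Definition Pr (A : set T) : R := fine (P A).

Lemma PrE A : measurable A -> P A = (Pr A)%:E.
Proof. by move=> mA; rewrite /Pr fineK // fin_num_measure. Qed.

Lemma Pr_ge0 A : 0 <= Pr A.
Proof. by rewrite /Pr fine_ge0. Qed.

Lemma Pr_le1 A : measurable A -> Pr A <= 1.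
Proof. by move=> mA; rewrite -lee_fin -PrE // probability_le1. Qed.

Lemma Pr_setT : Pr setT = 1.
Proof. by rewrite /Pr probability_setT. Qed.

Lemma PrU A B : measurable A -> measurable B -> A `&` B = set0 ->
  Pr (A `|` B) = Pr A + Pr B.
Proof. by move=> mA mB AB0; rewrite /Pr measureU // fineD // fin_num_measure. Qed.

Lemma Pr_le A B : measurable A -> measurable B -> A `<=` B -> Pr A <= Pr B.
Proof. by move=> mA mB AB; rewrite -lee_fin -!PrE // le_measure // inE. Qed.

Lemma Pr_setIC A B : measurable A -> measurable B ->
  Pr A = Pr (A `&` B) + Pr (A `&` ~` B).
Proof.
move=> mA mB; rewrite -PrU -?setIUr ?setUv ?setIT //.
- exact: measurableI.
- by apply: measurableI => //; exact: measurableC.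
- by rewrite setIACA setICr setI0.
Qed.

Lemma Pr_preimage_seq (O : eqType) (f : T -> O) (D : set T) (s : seq O) :
  measurable D -> (forall o, measurable [set w | f w = o]) -> uniq s ->
  measurable [set w | f w \in s] /\
  Pr (D `&` [set w | f w \in s]) = \sum_(o <- s) Pr (D `&` [set w | f w = o]).
Proof.
move=> mD mf; elim: s => [_|o s IH /= /andP[os us]].
  rewrite big_nil; have -> : [set w | f w \in [::]] = set0 by apply/seteqP; split.
  by rewrite setI0 /Pr measure0.
have [ms IHs] := IH us.
have -> : [set w | f w \in o :: s] = [set w | f w = o] `|` [set w | f w \in s].
  apply/seteqP; split => w /=; rewrite in_cons; first by move/predU1P.
  by case=> [->|->]; rewrite ?eqxx ?orbT.
split; first exact: measurableU.
rewrite setIUr PrU ?big_cons ?IHs //; try exact: measurableI.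
by apply/seteqP; split => // w [[_ /= fo] [_ /=]]; rewrite fo (negPf os).
Qed.

Lemma Pr_sum_fibres (O : finType) (f : T -> O) (D : set T) :
  measurable D -> (forall o, measurable [set w | f w = o]) ->
  Pr D = \sum_(o : O) Pr (D `&` [set w | f w = o]).
Proof.
move=> mD mf; rewrite -big_enum /=; have [_ <-] := Pr_preimage_seq mD mf (enum_uniq O).
by congr Pr; apply/seteqP; split => [w Dw|w []] //; split; rewrite /= ?mem_enum.
Qed.

Lemma Pr_preimage_pred (O : finType) (f : T -> O) (A : pred O) :
  (forall o, measurable [set w | f w = o]) ->
  measurable [set w | A (f w)] /\
  Pr [set w | A (f w)] = \sum_(o | A o) Pr [set w | f w = o].
Proof.
move=> mf; have [ms] := Pr_preimage_seq measurableT mf (enum_uniq A).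
have eA : [set w | f w \in enum A] = [set w | A (f w)].
  by apply/seteqP; split => w /=; rewrite mem_enum.
rewrite eA setTI big_enum_cond /= in ms * => ->; split => //.
by apply: eq_big => [x|x _]; rewrite ?andbT ?setTI.
Qed.

Lemma Pr_cond_product (O1 O2 : finType) (D : T -> O1) (G : T -> O2)
    (w1 : O1 -> R) (w2 : O2 -> R) (A : pred O1) (B : O1 -> pred O2) (p : R) :
  (forall o, measurable [set w | (D w, G w) = o]) ->
  (forall o1 o2, Pr [set w | (D w, G w) = (o1, o2)] = w1 o1 * w2 o2) ->
  \sum_o2 w2 o2 = 1 -> (forall o1, A o1 -> \sum_(o2 | B o1 o2) w2 o2 = p) ->
  Pr [set w | A (D w) && B (D w) (G w)] = p * Pr [set w | A (D w)].
Proof.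
move=> mDG PrDG w2_1 Bp.
have [_ /= ->] := Pr_preimage_pred (fun o : O1 * O2 => A o.1 && B o.1 o.2) mDG.
have [_ /= ->] := Pr_preimage_pred (fun o : O1 * O2 => A o.1) mDG.
rewrite [X in _ * X](eq_bigl (fun o : O1 * O2 => A o.1 && true)) => [|o]; last first.
  by rewrite andbT.
have PrDGo (o : O1 * O2) : Pr [set w | (D w, G w) = o] = w1 o.1 * w2 o.2 by case: o.
rewrite !(eq_bigr _ (fun o _ => PrDGo o)) -(pair_big_dep A B (fun o1 o2 => w1 o1 * w2 o2)).
rewrite -(pair_big_dep A (fun _ _ => true) (fun o1 o2 => w1 o1 * w2 o2)).
rewrite mulr_sumr; apply: eq_bigr => o1 Ao1.
by rewrite -!mulr_sumr w2_1 Bp // mulr1 mulrC.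
Qed.

Lemma measurable_forall_seq (I : eqType) (s : seq I) (F : I -> set T) :
  (forall i, measurable (F i)) -> measurable [set w | forall i, i \in s -> F i w].
Proof.
move=> mF; have -> : [set w | forall i, i \in s -> F i w] = \big[setI/setT]_(i <- s) F i.
  elim: s => [|i s IH]; first by rewrite big_nil; apply/seteqP; split.
  rewrite big_cons -IH; apply/seteqP; split => w /=.
    by move=> H; split => [|j js]; apply: H; rewrite in_cons ?eqxx ?js ?orbT.
  by move=> [Fi H] j; rewrite in_cons => /predU1P[->|/H].
by apply: bigsetI_measurable => i _; exact: mF.
Qed.

Lemma measurable_forall_fin (I : finType) (F : I -> set T) :
  (forall i, measurable (F i)) -> measurable [set w | forall i, F i w].
Proof.
move=> /(measurable_forall_seq (enum I)); congr measurable.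
by apply/seteqP; split => w /= H i => [|_]; [apply: H; rewrite mem_enum | exact: H].
Qed.

Lemma Pr_dist_le X Y B : measurable X -> measurable Y -> measurable B ->
  X `&` B = Y `&` B -> `|Pr X - Pr Y| <= 1 - Pr B.
Proof.
move=> mX mY mB XYB; have mCB := measurableC mB.
rewrite (Pr_setIC mX mB) (Pr_setIC mY mB) XYB.
have PrCB : Pr (~` B) = 1 - Pr B by rewrite -Pr_setT (Pr_setIC measurableT mB) !setTI addrC addKr.
have := Pr_ge0 (X `&` ~` B); have := Pr_ge0 (Y `&` ~` B).
have := Pr_le (measurableI _ _ mX mCB) mCB (@subIsetr _ _ _).
have := Pr_le (measurableI _ _ mY mCB) mCB (@subIsetr _ _ _).
rewrite PrCB ler_norml; lra.
Qed.

Lemma measurable_eventually (A_ : nat -> set T) (A : set T) :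
  (forall n, measurable (A_ n)) -> (forall w, \forall n \near \oo, A_ n w <-> A w) ->
  measurable A.
Proof.
move=> mA_ evA.
have -> : A = \bigcup_n0 \bigcap_(n in [set n | (n0 <= n)%N]) A_ n.
  apply/seteqP; split => [w Aw|w [n0 _ A_w]].
    by have [n0 _ H] := evA w; exists n0 => // n /H [_ /(_ Aw)].
  have [n1 _ H] := evA w; apply/(H (maxn n0 n1)); first exact: leq_maxr.
  by apply: A_w; rewrite /= leq_maxl.
apply: bigcupT_measurable => n0; apply: bigcap_measurable => [|n _]; last exact: mA_.
by exists n0 => /=.
Qed.

Lemma cvg_Pr_eventually (A_ : nat -> set T) (A : set T) :
  (forall n, measurable (A_ n)) -> (forall w, \forall n \near \oo, A_ n w <-> A w) ->
  Pr (A_ n) @[n --> \oo] --> Pr A.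
Proof.
move=> mA_ evA; have mA := measurable_eventually mA_ evA.
pose B n := \bigcap_(k in [set k | (n <= k)%N]) ((A_ k `&` A) `|` (~` A_ k `&` ~` A)).
have mB n : measurable (B n).
  apply: bigcap_measurable => [|k _]; first by exists n => /=.
  by apply: measurableU; apply: measurableI => //; exact: measurableC.
have ndB : nondecreasing_seq B.
  by move=> n m nm; apply/subsetPset => w Bw k /= mk; apply: Bw; exact: leq_trans mk.
have UB : \bigcup_n B n = setT.
  apply/seteqP; split => // w _; have [n0 _ H] := evA w; exists n0 => // k /= /H.
  by case: (pselect (A w)) => Aw [A_A AA_]; [left; split => //; exact: AA_ | right; split => // /A_A].
have PrB1 : Pr (B n) @[n --> \oo] --> (1 : R).
  have := nondecreasing_cvg_mu (mu := P) mB; rewrite UB => /(_ measurableT ndB).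
  rewrite [X in _ --> X](_ : _ = 1%:E); [by move/fine_cvg | exact: probability_setT].
move/cvgrPdist_le: PrB1 => PrB1; apply/cvgrPdist_le => e e0; near=> n.
apply: le_trans (_ : `|1 - Pr (B n)| <= e); last by near: n; exact: PrB1.
apply: le_trans (Pr_dist_le mA (mA_ n) (mB n) _) (ler_norm _).
by apply/seteqP; split => w [XA Bw]; split => //; case: (Bw n (leqnn n)) => -[].
Unshelve. all: by end_near.
Qed.

End RealProbability.

Section Truncation.
Context (N : nat) (T : Type) (K : nat -> 'I_N -> T -> option nat)
  (L : nat -> 'I_N -> nat -> T -> 'I_N) (init : 'I_N -> bool).

Definition Kcut (n h : nat) (i : 'I_N) (w : T) : nat :=
  if K h i w is Some k then minn k n else n.

Lemma Kcut_le n h i w : (Kcut n h i w <= n)%N.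
Proof. by rewrite /Kcut; case: (K h i w) => // k; rewrite geq_minr. Qed.

Fixpoint type0_cut (n h : nat) (i : 'I_N) (w : T) : bool :=
  if h is h'.+1 then
    [forall j : 'I_n, (j < Kcut n h i w)%N ==> type0_cut n h' (L h i j w) w]
  else init i.

Lemma type0_cut_eventually w h :
  \forall n \near \oo, forall i, type0_cut n h i w = type0 init K L h i w.
Proof.
elim: h => [|h IH]; first exact: nearW.
apply: filter_forall => i /=; rewrite /Kcut; case: (K h.+1 i w) => [k|].
  near=> n; have kn : (k <= n)%N by near: n; exact: nbhs_infty_ge.
  rewrite (minn_idPl kn); apply/forallP/forallP => H j.
    by have := H (widen_ord kn j); rewrite /= ltn_ord (near IH n).
  by apply/implyP => jk; rewrite (near IH n); have := H (Ordinal jk).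
case: (pselect (forall j, type0 init K L h (L h.+1 i j w) w)) => [allj|/existsNP[j0 notj0]].
  near=> n; rewrite (asboolT allj); apply/forallP => j.
  by rewrite ltn_ord (near IH n); have := allj j.
near=> n; have j0n : (j0 < n)%N by near: n; exact: nbhs_infty_gt.
rewrite asboolF; last by move=> /(_ j0).
apply/negbTE/forallPn; exists (Ordinal j0n).
by rewrite /= j0n /= (near IH n); move/negP: notj0.
Unshelve. all: by end_near.
Qed.

Definition cut_set (n h : nat) (w : T) : {set 'I_N} := [set i | type0_cut n h i w].

Section Data.
Variable n : nat.

Definition Data := ('I_n.+1 * {ffun 'I_n -> 'I_N})%type.

Definition data (h : nat) (w : T) : {ffun 'I_N -> Data} :=
  [ffun i => (inord (Kcut n h i w), [ffun j : 'I_n => L h i j w])].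

Definition parents_in (S : {set 'I_N}) (x : Data) : bool :=
  [forall j : 'I_n, (j < x.1)%N ==> (x.2 j \in S)].

Definition next_set (S : {set 'I_N}) (o : {ffun 'I_N -> Data}) : {set 'I_N} :=
  [set i | parents_in S (o i)].

Lemma next_set_data h w : next_set (cut_set n h w) (data h.+1 w) = cut_set n h.+1 w.
Proof.
apply/setP => i; rewrite !inE /parents_in ffunE /= inordK ?ltnS ?Kcut_le //.
by apply: eq_forallb => j; rewrite ffunE inE.
Qed.

Variable g : nat.

Fixpoint replay (hist : {ffun 'I_g -> {ffun 'I_N -> Data}}) (h : nat) : {set 'I_N} :=
  if h is h'.+1 then
    if insub h' is Some k then next_set (replay hist h') (hist k) else replay hist h'
  else [set i | init i].

Definition history (w : T) : {ffun 'I_g -> {ffun 'I_N -> Data}} :=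
  [ffun k : 'I_g => data k.+1 w].

Lemma replay_history w h : (h <= g)%N -> replay (history w) h = cut_set n h w.
Proof.
elim: h => [|h IH] hg /=; first by apply/setP => i; rewrite !inE.
by rewrite insubT IH ?(ltnW hg) // ffunE next_set_data.
Qed.

End Data.
End Truncation.

Definition Qcut (R : ringType) (Q : option nat -> R) (n c : nat) : R :=
  if (c < n)%N then Q (Some c) else 1 - \sum_(k < n) Q (Some (k : nat)).

Section Cylinders.
Context (R : realType) (d : measure_display) (T : measurableType d)
  (P : probability T R) (N : nat) (Q : option nat -> R)
  (K : nat -> 'I_N -> T -> option nat) (L : nat -> 'I_N -> nat -> T -> 'I_N).
Hypothesis WF : WF_iid P Q K L.
Variable n : nat.

Local Notation Pr := (Pr P).
Local Notation Kcut := (Kcut K n).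
Local Notation Qcut := (Qcut Q n).

Lemma Kcut_ltP h i w c : (c < n)%N -> Kcut h i w = c <-> K h i w = Some c.
Proof.
rewrite /Kcut => cn; case: (K h i w) => [k|]; split => //.
- by case: leqP => [_ ->|_ nc] //; move: cn; rewrite -nc ltnn.
- by case=> ->; rewrite (minn_idPl (ltnW cn)).
- by move=> nc; move: cn; rewrite -nc ltnn.
Qed.

Lemma Kcut_maxP h i w : Kcut h i w = n <-> forall c : 'I_n, K h i w <> Some (c : nat).
Proof.
rewrite /Kcut; case: (K h i w) => [k|]; split => //.
- move=> kn c [kc]; have ck := ltn_ord c; rewrite -kc in ck.
  by move: kn; rewrite (minn_idPl (ltnW ck)) => kn; move: ck; rewrite kn ltnn.
- move=> Kn; apply/minn_idPr; rewrite leqNgt; apply/negP => kn.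
  exact: (Kn (Ordinal kn)).
Qed.

Lemma measurable_Kcut h i c : measurable [set w | Kcut h i w = c].
Proof.
have mK a : measurable [set w | K h i w = a] := WF.1 h i a.
case: (ltngtP c n) => cn.
- by rewrite (_ : [set w | _] = [set w | K h i w = Some c]) //; apply/seteqP; split => w /(Kcut_ltP _ _ _ cn).
- rewrite (_ : [set w | _] = set0) //; apply/seteqP; split => w //= Kc.
  by move: (Kcut_le K n h i w); rewrite Kc leqNgt cn.
- rewrite cn (_ : [set w | _] = [set w | forall c : 'I_n, (~` [set w | K h i w = Some (c : nat)]) w]).
    by apply: measurable_forall_fin => c'; exact/measurableC/mK.
  by apply/seteqP; split => w /Kcut_maxP.
Qed.

Definition cylinder (s1 : seq (nat * 'I_N)) (a : nat * 'I_N -> option nat)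
    (s2 : seq (nat * 'I_N)) (c : nat * 'I_N -> nat)
    (t : seq (nat * 'I_N * nat)) (b : nat * 'I_N * nat -> 'I_N) : set T :=
  [set w | (forall v, v \in s1 -> K v.1 v.2 w = a v) /\
           (forall v, v \in s2 -> Kcut v.1 v.2 w = c v) /\
           (forall u, u \in t -> L u.1.1 u.1.2 u.2 w = b u)].

Lemma measurable_cylinder s1 a s2 c t b : measurable (cylinder s1 a s2 c t b).
Proof.
apply: measurableI; first by apply: measurable_forall_seq => v; exact: WF.1.
apply: measurableI; first by apply: measurable_forall_seq => v; exact: measurable_Kcut.
by apply: measurable_forall_seq => u; exact: WF.2.1.
Qed.

Lemma Pr_cylinder (t : seq (nat * 'I_N * nat)) b c s2 : forall s1 a,
  uniq (s1 ++ s2) -> uniq t -> {in s2, forall v, (c v <= n)%N} ->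
  Pr (cylinder s1 a s2 c t b) =
  \prod_(v <- s1) Q (a v) * \prod_(v <- s2) Qcut (c v) * (N%:R^-1) ^+ size t.
Proof.
elim: s2 => [|v s2 IH] s1 a; rewrite ?cats0 => us1 ut cn.
  rewrite big_nil mulr1 /Pr (_ : cylinder _ _ _ _ _ _ = [set w |
      (forall v, v \in s1 -> K v.1 v.2 w = a v) /\
      (forall u, u \in t -> L u.1.1 u.1.2 u.2 w = b u)]).
    by rewrite (WF.2.2 s1 t a b us1 ut).
  by apply/seteqP; split => w /= [Ka]; [case | split].
have /andP[vs12 us12] : uniq (v :: s1 ++ s2) by rewrite -cat1s uniq_catCA.
have vs1 : v \notin s1 by apply: contra vs12; rewrite mem_cat => ->.
have cv_le : (c v <= n)%N by apply: cn; rewrite mem_head.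
have {}cn : {in s2, forall u, (c u <= n)%N} by move=> u us2; apply: cn; rewrite inE us2 orbT.
pose rest := \prod_(u <- s1) Q (a u) * \prod_(u <- s2) Qcut (c u) * (N%:R^-1) ^+ size t.
have Pr_lt k : (k < n)%N ->
    Pr (cylinder s1 a s2 c t b `&` [set w | Kcut v.1 v.2 w = k]) = Q (Some k) * rest.
  move=> kn; pose a' u := if u == v then Some k else a u.
  have -> : cylinder s1 a s2 c t b `&` [set w | Kcut v.1 v.2 w = k] =
      cylinder (v :: s1) a' s2 c t b.
    apply/seteqP; split => w /=.
      move=> [[Ka KcLb] Kv]; split=> // u; rewrite inE /a' => /predU1P[->|vs].
        by rewrite eqxx; exact/Kcut_ltP.
      by case: eqP vs => [->|_]; [rewrite (negPf vs1) | exact: Ka].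
    move=> [Ka KcLb]; split; last by apply/(Kcut_ltP _ _ _ kn); have := Ka v; rewrite mem_head /a' eqxx; apply.
    split=> // u us; have := Ka u; rewrite inE us orbT /a' => /(_ isT).
    by case: eqP us => [->|//]; rewrite (negPf vs1).
  rewrite IH //; last by rewrite cat_cons cons_uniq vs12.
  rewrite big_cons /a' eqxx /rest !mulrA; congr (_ * _ * _ * _).
  by apply: eq_big_seq => u us; case: eqP us => // ->; rewrite (negPf vs1).
have -> : cylinder s1 a (v :: s2) c t b =
    cylinder s1 a s2 c t b `&` [set w | Kcut v.1 v.2 w = c v].
  apply/seteqP; split => w /=.
    move=> [Ka [Kc Lb]]; split; last exact/Kc/mem_head.
    by split=> //; split=> // u us2; apply: Kc; rewrite inE us2 orbT.
  by move=> [[Ka [Kc Lb]] Kv]; split=> //; split=> // u; rewrite inE => /predU1P[->|/Kc].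
rewrite big_cons /(Qcut (c v)); case: ltnP => [cvn|ncv].
  by rewrite Pr_lt // /rest; ring.
have cvn : c v = n by apply/eqP; rewrite eqn_leq ncv cv_le.
have [_] := Pr_preimage_seq P (measurable_cylinder s1 a s2 c t b)
  (@measurable_Kcut v.1 v.2) (iota_uniq 0 n.+1).
rewrite -[iota 0 n.+1]/(index_iota 0 n.+1) big_nat_recr //= cvn.
have -> : cylinder s1 a s2 c t b `&` [set w | Kcut v.1 v.2 w \in index_iota 0 n.+1] =
    cylinder s1 a s2 c t b.
  by apply/seteqP; split => [w []|w Cw] //; split; rewrite //= mem_index_iota ltnS Kcut_le.
have -> : \sum_(0 <= k < n) Pr (cylinder s1 a s2 c t b `&` [set w | Kcut v.1 v.2 w = k]) =
    (\sum_(k < n) Q (Some (k : nat))) * rest.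
  by rewrite big_mkord mulr_suml; apply: eq_bigr => k _; exact: Pr_lt.
rewrite (IH _ _ us12 ut cn) -/rest => e.
set Z := Pr (cylinder s1 a s2 c t b `&` _) in e *.
have -> : Z = rest - (\sum_(k < n) Q (Some (k : nat))) * rest.
  by rewrite {1}e addrAC subrr add0r.
by rewrite /rest; ring.
Qed.

Lemma sum_Q_le1 : (0 < N)%N -> \sum_(k < n) Q (Some (k : nat)) <= 1.
Proof.
move=> N_gt0; rewrite -subr_ge0.
have := @Pr_cylinder [::] (fun u => u.1.2) (fun=> n) [:: (0%N, Ordinal N_gt0)] [::]
  (fun=> None) isT isT (fun v _ => leqnn n).
by rewrite big_nil big_seq1 /Qcut ltnn mul1r mulr1 => <-; exact: Pr_ge0.
Qed.

End Cylinders.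

Section JointLaw.
Context (R : realType) (d : measure_display) (T : measurableType d)
  (P : probability T R) (N : nat) (Q : option nat -> R)
  (K : nat -> 'I_N -> T -> option nat) (L : nat -> 'I_N -> nat -> T -> 'I_N).
Hypothesis WF : WF_iid P Q K L.
Variable n : nat.

Local Notation Pr := (Pr P).
Local Notation Gen := {ffun 'I_N -> Data N n}.

Definition weight (o : Gen) : R := \prod_(i : 'I_N) (Qcut Q n (o i).1 * (N%:R^-1) ^+ n).

Lemma Pr_data (hs : seq nat) (o : nat -> Gen) : uniq hs ->
  measurable [set w | forall h, h \in hs -> data K L n h w = o h] /\
  Pr [set w | forall h, h \in hs -> data K L n h w = o h] = \prod_(h <- hs) weight (o h).
Proof.
move=> uhs.
pose s2 := [seq (h, i) | h <- hs, i <- index_enum 'I_N].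
pose t := [seq (v.1, v.2, val j) | v <- s2, j <- index_enum 'I_n].
pose c (v : nat * 'I_N) := val (o v.1 v.2).1.
pose b (u : nat * 'I_N * nat) := if insub u.2 is Some j then (o u.1.1 u.1.2).2 j else u.1.2.
have us2 : uniq s2 by apply: allpairs_uniq => // [|[? ?] [? ?] _ _]; rewrite ?index_enum_uniq.
have ut : uniq t.
  apply: allpairs_uniq => //; first exact: index_enum_uniq.
  by move=> [[? ?] ?] [[? ?] ?] _ _ /= [-> -> /val_inj ->].
have -> : [set w | forall h, h \in hs -> data K L n h w = o h] =
    cylinder K L n [::] (fun=> None) s2 c t b.
  apply/seteqP; split => w /=.
    move=> D; split=> //; split.
      move=> _ /allpairsP[[h i] [/= hh _ ->]] /=; rewrite /c -(D h hh) ffunE /=.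
      by rewrite inordK // ltnS Kcut_le.
    move=> _ /allpairsP[[[h i] j] [/= /allpairsP[[h' i'] [/= hh _ [-> ->]]] _ ->]].
    by rewrite /b /= valK -(D h' hh) !ffunE.
  move=> [_ [Kc Lb]] h hh; apply/ffunP => i; rewrite ffunE.
  have := Kc (h, i) (allpairs_f pair hh (mem_index_enum i)).
  have Lj (j : 'I_n) : L h i j w = (o h i).2 j.
    have ht : (h, i, val j) \in t by apply/allpairsP; exists ((h, i), j); rewrite allpairs_f.
    by rewrite (Lb _ ht) /b /= valK.
  rewrite /c /=; case: (o h i) Lj => k l /= Lj Kk; congr (_, _).
    by rewrite Kk inord_val.
  by apply/ffunP => j; rewrite ffunE Lj.
split; first exact: (measurable_cylinder WF).
rewrite (Pr_cylinder WF) //; last by move=> v _; rewrite /c -ltnS ltn_ord.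
have -> : (N%:R^-1 : R) ^+ size t = \prod_(u <- t) N%:R^-1.
  by rewrite big_const_seq count_predT iter_mulr_1.
rewrite big_nil mul1r !big_allpairs_dep -big_split /=; apply: eq_bigr => h _.
rewrite -big_split /=; apply: eq_bigr => i _.
by rewrite prodr_const card_ord.
Qed.

Lemma Pr_history g (o1 : {ffun 'I_g -> Gen}) (o2 : Gen) :
  measurable [set w | (history K L n g w, data K L n g.+1 w) = (o1, o2)] /\
  Pr [set w | (history K L n g w, data K L n g.+1 w) = (o1, o2)] =
  \prod_(k : 'I_g) weight (o1 k) * weight o2.
Proof.
pose o h : Gen := if @insub _ (fun k => (k < g)%N) 'I_g h.-1 is Some k then o1 k else o2.
have oS (k : 'I_g) : o k.+1 = o1 k by rewrite /o /= valK.
have og : o g.+1 = o2 by rewrite /o /= insubF ?ltnn.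
have uhs : uniq (g.+1 :: iota 1 g) by rewrite /= iota_uniq mem_iota ltnn andbF.
have -> : [set w | (history K L n g w, data K L n g.+1 w) = (o1, o2)] =
    [set w | forall h, h \in g.+1 :: iota 1 g -> data K L n h w = o h].
  apply/seteqP; split => w /=.
    case=> Hw Dw h; rewrite inE mem_iota => /predU1P[->|]; first by rewrite og.
    case: h => // h /andP[_]; rewrite add1n ltnS => hg.
    by rewrite -[h]/(val (Ordinal hg)) oS -Hw ffunE.
  move=> D; rewrite -og -D ?mem_head //; congr (_, _); apply/ffunP => k.
  by rewrite ffunE -oS D // inE mem_iota add1n !ltnS ltn_ord orbT.
have [mD ->] := Pr_data o uhs; split=> //.
rewrite big_cons mulrC og (iotaDl 1 0 g) big_map; congr (_ * _).
have -> : iota 0 g = index_iota 0 g by rewrite /index_iota subn0.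
by rewrite big_mkord; apply: eq_bigr => k _; rewrite add1n oS.
Qed.

End JointLaw.

Definition pgf_cut (R : ringType) (Q : option nat -> R) (n : nat) (x : R) : R :=
  \sum_(c < n.+1) Qcut Q n c * x ^+ c.

Section TruncatedTransition.
Context (R : realType) (d : measure_display) (T : measurableType d)
  (P : probability T R) (N : nat) (Q : option nat -> R)
  (K : nat -> 'I_N -> T -> option nat) (L : nat -> 'I_N -> nat -> T -> 'I_N)
  (init : 'I_N -> bool).
Hypotheses (WF : WF_iid P Q K L) (N_gt0 : (0 < N)%N).
Variable n : nat.

Local Notation Pr := (Pr P).
Local Notation Gen := {ffun 'I_N -> Data N n}.
Local Notation r x := (Qcut Q n x.1 * (N%:R^-1) ^+ n).

Lemma sum_parents_in (S : {set 'I_N}) :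
  \sum_(x : Data N n | parents_in S x) r x = pgf_cut Q n (#|S|%:R / N%:R).
Proof.
rewrite (eq_bigl (fun x : Data N n => true && parents_in S (x.1, x.2))) //.
rewrite -(pair_big_dep xpredT (fun c l => parents_in S (c, l))
  (fun (c : 'I_n.+1) (_ : {ffun 'I_n -> 'I_N}) => Qcut Q n c * (N%:R^-1) ^+ n)) /=.
apply: eq_bigr => c _; rewrite -mulr_sumr sum_labels // ?pnatr_eq0 -?lt0n //.
by rewrite -ltnS ltn_ord.
Qed.

Lemma pgf_cut1 : pgf_cut Q n 1 = 1.
Proof.
rewrite /pgf_cut big_ord_recr /= /Qcut ltnn expr1n mulr1.
rewrite (eq_bigr (fun c : 'I_n => Q (Some (c : nat)))) => [|c _]; last first.
  by rewrite ltn_ord expr1n mulr1.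
by rewrite addrC subrK.
Qed.

Lemma sum_Data_weight : \sum_(x : Data N n) r x = 1.
Proof.
have := sum_parents_in [set: 'I_N]%SET; rewrite cardsT card_ord divff ?pnatr_eq0 -?lt0n //.
rewrite pgf_cut1 => e; rewrite -[RHS]e; apply: eq_bigl => x.
by apply/esym/forallP => j; rewrite finset.in_setT implybT.
Qed.

Lemma sum_weight : \sum_(o : Gen) weight Q o = 1.
Proof.
rewrite -(bigA_distr_bigA (fun (_ : 'I_N) (x : Data N n) => r x)) /=.
by rewrite sum_Data_weight prodr_const expr1n.
Qed.

Lemma sum_weight_count (S : {set 'I_N}) (m : nat) :
  let p := pgf_cut Q n (#|S|%:R / N%:R) in
  \sum_(o : Gen | #|next_set S o| == m) weight Q o =
  'C(N, m)%:R * p ^+ m * (1 - p) ^+ (N - m).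
Proof.
rewrite /= /next_set /weight (sum_prod_ffun_count _ (fun x : Data N n => r x) (parents_in S)).
rewrite card_ord sum_parents_in -[X in X - _]sum_Data_weight.
by rewrite [X in X - _](bigID (parents_in S)) /= sum_parents_in addrC addrK.
Qed.

Definition freq_cut (h : nat) (w : T) : R := #|cut_set K L init n h w|%:R / N%:R.

Lemma Pr_freq_cut (g : nat) (xs : nat -> R) (m : nat) :
  let E := [set w | forall h, (h <= g)%N -> freq_cut h w = xs h] in
  let F := [set w | freq_cut g.+1 w = m%:R / N%:R] in
  let p := pgf_cut Q n (xs g) in
  [/\ measurable E, measurable (E `&` F) &
      Pr (E `&` F) = 'C(N, m)%:R * p ^+ m * (1 - p) ^+ (N - m) * Pr E].
Proof.
move=> E F p.
have N0 : (N%:R : R) != 0 by rewrite pnatr_eq0 -lt0n.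
have frac_inj (a b : nat) : (a%:R / N%:R : R) = b%:R / N%:R -> a = b.
  by move/(mulIf (invr_neq0 N0))/eqP; rewrite eqr_nat => /eqP.
pose A (hist : {ffun 'I_g -> Gen}) :=
  [forall h : 'I_g.+1, #|replay init hist h|%:R / N%:R == xs h].
pose B (hist : {ffun 'I_g -> Gen}) (o : Gen) := #|next_set (replay init hist g) o| == m.
pose D := history K L n g; pose G := data K L n g.+1.
have mDG o : measurable [set w | (D w, G w) = o].
  by case: o => o1 o2; case: (Pr_history WF o1 o2).
have EA : E = [set w | A (D w)].
  apply/seteqP; split => w /= Ew.
    apply/forallP => h; have hg : (h <= g)%N by rewrite -ltnS.
    by rewrite replay_history //; apply/eqP; exact: Ew.
  move=> h hg; have := forallP Ew (Ordinal (hg : (h < g.+1)%N)).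
  by rewrite /= replay_history // => /eqP.
have EFAB : E `&` F = [set w | A (D w) && B (D w) (G w)].
  rewrite EA; apply/seteqP; split => w /=.
    move=> [Aw Fw]; rewrite Aw /B replay_history // next_set_data.
    by apply/eqP/frac_inj; exact: Fw.
  move=> /andP[Aw]; rewrite /B replay_history // next_set_data => /eqP Fw.
  by split => //; rewrite /F /= /freq_cut Fw.
rewrite EFAB EA; split.
- by case: (Pr_preimage_pred P (fun o => A o.1) mDG).
- by case: (Pr_preimage_pred P (fun o => A o.1 && B o.1 o.2) mDG).
rewrite (Pr_cond_product mDG (w1 := fun hist : {ffun 'I_g -> Gen} => \prod_k weight Q (hist k))
  (w2 := fun o : Gen => weight Q o) (p := 'C(N, m)%:R * p ^+ m * (1 - p) ^+ (N - m))) //.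
- by move=> o1 o2; case: (Pr_history WF o1 o2).
- exact: sum_weight.
move=> hist /forallP /(_ ord_max) /= /eqP xg.
by rewrite sum_weight_count xg.
Qed.

End TruncatedTransition.

Section PgfLimit.
Context (R : realType) (Q : option nat -> R).
Hypotheses (Q_ge0 : forall a, 0 <= Q a) (Q0 : Q (Some 0%N) = 0)
  (Q_sum : Q None + \big[+%R/0%R]_(0 <= k <oo) Q (Some k) = 1)
  (Q_le1 : forall n, \sum_(k < n) Q (Some (k : nat)) <= 1).

Lemma pgf_cutE n x : pgf_cut Q n x =
  \sum_(k < n) x ^+ k * Q (Some (k : nat)) + (1 - \sum_(k < n) Q (Some (k : nat))) * x ^+ n.
Proof.
rewrite /pgf_cut big_ord_recr /= /Qcut ltnn; congr (_ + _).
by apply: eq_bigr => k _; rewrite ltn_ord mulrC.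
Qed.

Lemma pgf_cut_cvg x : 0 <= x <= 1 -> pgf_cut Q n x @[n --> \oo] --> pgf Q x.
Proof.
move=> /andP[x_ge0 x_le1].
pose F k := x ^+ k * Q (Some k).
have F_ge0 k : 0 <= F k by rewrite mulr_ge0 ?exprn_ge0.
have sumF1 : (fun n => \sum_(1 <= k < n) F k) = (fun n => \sum_(k < n) F k).
  apply/funext => -[|n]; first by rewrite big_geq // big_ord0.
  by rewrite -(big_mkord xpredT) (big_ltn (ltn0Sn n)) /F Q0 mulr0 add0r.
have cvF : cvgn (fun n => \sum_(k < n) F k).
  apply: nondecreasing_is_cvgn.
    by apply/nondecreasing_seqP => n; rewrite big_ord_recr /= lerDl.
  exists 1 => _ [n _ <-]; apply: le_trans (Q_le1 n); apply: ler_sum => k _.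
  by rewrite /F ler_piMl // exprn_ile1.
rewrite /pgf sumF1; case: (x =P 1) => [x1|/eqP x_neq1].
  rewrite x1 (_ : (fun n => pgf_cut Q n 1) = fun=> 1); last first.
    by apply/funext => n; exact: pgf_cut1.
  rewrite (_ : (fun n => \sum_(k < n) F k) = fun n => \sum_(0 <= k < n) Q (Some k)).
    by rewrite addrC Q_sum; exact: cvg_cst.
  apply/funext => n; rewrite big_mkord; apply: eq_bigr => k _.
  by rewrite /F x1 expr1n mul1r.
rewrite addr0 (_ : (fun n => pgf_cut Q n x) =
    (fun n => \sum_(k < n) F k + (1 - \sum_(k < n) Q (Some (k : nat))) * x ^+ n)).
  rewrite -[X in _ --> X]addr0; apply: cvgD => //.
  apply: (@squeeze_cvgr _ _ _ _ (fun=> 0) (fun n => x ^+ n)); last 2 first.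
  - exact: cvg_cst.
  - by apply: cvg_expr; rewrite ger0_norm // lt_neqAle x_neq1.
  near=> n; apply/andP; split; first by rewrite mulr_ge0 ?exprn_ge0 ?subr_ge0.
  by rewrite ler_piMl ?exprn_ge0 // lerBlDr lerDl sumr_ge0.
by apply/funext => n; rewrite pgf_cutE.
Unshelve. all: by end_near.
Qed.

End PgfLimit.

Lemma cvg_binomial_term (R : realType) (p_ : nat -> R) (p : R) (N m : nat) :
  p_ n @[n --> \oo] --> p ->
  'C(N, m)%:R * p_ n ^+ m * (1 - p_ n) ^+ (N - m) @[n --> \oo] -->
  'C(N, m)%:R * p ^+ m * (1 - p) ^+ (N - m).
Proof.
move=> cvp; apply: cvgM; first apply: cvgM; first exact: cvg_cst.
  exact: (continuous_cvg _ (@exprn_continuous R m p)).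
apply: (continuous_cvg _ (@exprn_continuous R (N - m) (1 - p))).
by apply: cvgB => //; exact: cvg_cst.
Qed.

Lemma freq_cut_eventually (R : realType) (d : measure_display) (T : measurableType d)
    (N : nat) (K : nat -> 'I_N -> T -> option nat) (L : nat -> 'I_N -> nat -> T -> 'I_N)
    (init : 'I_N -> bool) (w : T) (g : nat) :
  \forall n \near \oo, forall h, (h <= g)%N ->
    freq_cut R K L init n h w = freq0 R init K L h w.
Proof.
have ev : \forall n \near \oo, forall (h : 'I_g.+1) i,
    type0_cut K L init n h i w = type0 init K L h i w.
  by apply: filter_forall => h; exact: type0_cut_eventually.
apply: filterS ev => n ev h hg; rewrite /freq_cut /freq0; congr (_%:R / _).
apply: eq_card => i; rewrite finset.inE (ev (Ordinal (hg : (h < g.+1)%N))) /=.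
by apply/idP/idP => [|/set_mem]; [exact: mem_set|].

Qed.

Lemma freq0_in01 (R : realType) (N : nat) (T : Type) (init : 'I_N -> bool)
    (K : nat -> 'I_N -> T -> option nat) (L : nat -> 'I_N -> nat -> T -> 'I_N) h w :
  (0 < N)%N -> 0 <= freq0 R init K L h w <= 1.
Proof.
move=> N_gt0; rewrite /freq0 divr_ge0 //= ler_pdivrMr ?ltr0n // mul1r ler_nat.
by rewrite -[X in (_ <= X)%N]card_ord max_card.
Qed.

Theorem proposition2p2 (R : realType) (d : measure_display) (T : measurableType d)
  (P : probability T R) (N : nat) (Q : option nat -> R)
  (K : nat -> 'I_N -> T -> option nat) (L : nat -> 'I_N -> nat -> T -> 'I_N)
  (init : 'I_N -> bool) :
  (0 < N)%N ->
  (forall a, 0 <= Q a) ->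
  Q (Some 0%N) = 0 ->
  Q None + \big[+%R/0%R]_(0 <= k <oo) Q (Some k) = 1 ->
  WF_iid P Q K L ->
  forall (g : nat) (xs : nat -> R) (m : nat), (m <= N)%N ->
    let E := [set w | forall h, (h <= g)%N -> freq0 R init K L h w = xs h] in
    P (E `&` [set w | freq0 R init K L g.+1 w = m%:R / N%:R])
    = ((('C(N, m))%:R * pgf Q (xs g) ^+ m * (1 - pgf Q (xs g)) ^+ (N - m))%:E * P E)%E.
Proof.
move=> N_gt0 Q_ge0 Q0 Q_sum WF g xs m _ E.
set F := [set w | freq0 R init K L g.+1 w = _].
pose E_ n := [set w | forall h, (h <= g)%N -> freq_cut R K L init n h w = xs h].
pose F_ n := [set w | freq_cut R K L init n g.+1 w = m%:R / N%:R].
have ev w : \forall n \near \oo, (E_ n w <-> E w) /\ ((E_ n `&` F_ n) w <-> (E `&` F) w).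
  have := freq_cut_eventually R K L init w g.+1; apply: filterS => n ev.
  have EE : E_ n w <-> E w.
    by split => Ew h hg; have hg1 := leqW hg; [rewrite -ev | rewrite ev] => //; exact: Ew.
  have FF : F_ n w <-> F w by rewrite /F_ /F /= ev.
  by split=> //; split=> -[Ew Fw]; split; [apply/EE | apply/FF | apply/EE | apply/FF].
have evE w : \forall n \near \oo, E_ n w <-> E w by apply: filterS (ev w) => n [].
have evEF w : \forall n \near \oo, (E_ n `&` F_ n) w <-> (E `&` F) w.
  by apply: filterS (ev w) => n [].
have mE_ n : measurable (E_ n) by case: (Pr_freq_cut init WF N_gt0 n g xs m).
have mEF_ n : measurable (E_ n `&` F_ n) by case: (Pr_freq_cut init WF N_gt0 n g xs m).
case: (pselect (exists w, E w)) => [[w Ew]|noE]; last first.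
  have -> : E = set0 by apply/seteqP; split => // w Ew; apply: noE; exists w.
  by rewrite set0I measure0 mule0.
rewrite (PrE P (measurable_eventually mEF_ evEF)) (PrE P (measurable_eventually mE_ evE)).
congr EFin; apply: (norm_cvg_unique (cvg_Pr_eventually mEF_ evEF)).
have PrEF_ n : Pr P (E_ n `&` F_ n) =
    'C(N, m)%:R * pgf_cut Q n (xs g) ^+ m * (1 - pgf_cut Q n (xs g)) ^+ (N - m) * Pr P (E_ n).
  by case: (Pr_freq_cut init WF N_gt0 n g xs m).
rewrite (funext PrEF_); apply: cvgM; last exact: cvg_Pr_eventually mE_ evE.
apply/cvg_binomial_term/pgf_cut_cvg => //; first by move=> n; exact: sum_Q_le1 WF n N_gt0.
by rewrite -(Ew g (leqnn g)) freq0_in01.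
Qed.
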